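(* Let $V$ be a real vector space of dimension $n$, $1\le k\le n-1$, and let $L\subseteq V\oplus\wedge^kV^*$ be a weakly lagrangian subspace with $L\cap\wedge^kV^*=\{0\}$. Then $L=\{X+\varepsilon(X)\mid X\in E\}$ where $E=\mathrm{pr}_1(L)$ and $\varepsilon:E\to\wedge^kV^*$ is a linear $E$-skew map satisfying $\mathrm{Im}(\varepsilon)^\circ=\ker(\varepsilon)$. Moreover, $L$ is lagrangian if and only if $E=V$.
   Context: On $V\oplus\wedge^kV^*$ consider the $\wedge^{k-1}V^*$-valued pairing $\langle X+\alpha,Y+\beta\rangle=i_X\beta+i_Y\alpha$; $L^\perp$ denotes the orthogonal of $L$. $L$ is isotropic if $L\subseteq L^\perp$ and lagrangian if $L=L^\perp$. $\mathrm{pr}_1,\mathrm{pr}_2$ are the projections onto $V$ and $\wedge^kV^*$. For a subspace $S\subseteq\wedge^kV^*$, $S^\circ=\{X\in V\mid i_X\eta=0\ \forall \eta\in S\}$. A subspace $L$ is weakly lagrangian if it is isotropic and $L\cap V=\mathrm{pr}_2(L)^\circ$. A linear map $\varepsilon:E\to\wedge^kV^*$ is $E$-skew if $i_Y\varepsilon(X)=-i_X\varepsilon(Y)$ for all $X,Y\in E$. *)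

(* Forms are encoded as functions seq V -> R; a k-kForm (element of /\^k V^* )
   is such a function that vanishes on sequences of length <> k, and is
   multilinear and alternating in its arguments. *)
From HB Require Import structures.
From mathcomp Require Import all_boot all_order all_algebra.
From mathcomp Require Import reals.
Set Implicit Arguments. Unset Strict Implicit. Unset Printing Implicit Defensive.
Import GRing.Theory Num.Theory.
Local Open Scope ring_scope.

Section Defs.
Variables (R : realType) (n : nat).

Definition Vsp := 'rV[R]_n.
Definition kForm := seq Vsp -> R.

Definition form0 : kForm := fun _ => 0.
Definition formD (a b : kForm) : kForm := fun s => a s + b s.
Definition formZ (c : R) (a : kForm) : kForm := fun s => c * a s.

Definition multilinear (f : kForm) : Prop :=
  forall (s1 s2 : seq Vsp) (c : R) (x y : Vsp),
    f (s1 ++ (c *: x + y) :: s2) = c * f (s1 ++ x :: s2) + f (s1 ++ y :: s2).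

Definition alternating (f : kForm) : Prop :=
  forall (s1 s2 s3 : seq Vsp) (x : Vsp), f (s1 ++ x :: s2 ++ x :: s3) = 0.

Definition is_kform (k : nat) (f : kForm) : Prop :=
  [/\ forall s, size s <> k -> f s = 0, multilinear f & alternating f].

Definition contract (X : Vsp) (f : kForm) : kForm := fun s => f (X :: s).

Definition pairing (p q : Vsp * kForm) : kForm :=
  formD (contract p.1 q.2) (contract q.1 p.2).

Definition subspace (k : nat) (L : Vsp * kForm -> Prop) : Prop :=
  [/\ L (0, form0),
      forall p q, L p -> L q -> L (p.1 + q.1, formD p.2 q.2),
      forall c p, L p -> L (c *: p.1, formZ c p.2)
    & forall p, L p -> is_kform k p.2].

Definition orth (k : nat) (L : Vsp * kForm -> Prop) : Vsp * kForm -> Prop :=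
  fun p => is_kform k p.2 /\ forall q, L q -> pairing p q = form0.

Definition isotropic k L := forall p, L p -> orth k L p.
Definition lagrangian k L := forall p, L p <-> orth k L p.

Definition pr1 (L : Vsp * kForm -> Prop) : Vsp -> Prop := fun X => exists a, L (X, a).
Definition pr2 (L : Vsp * kForm -> Prop) : kForm -> Prop := fun a => exists X, L (X, a).

Definition ann (S : kForm -> Prop) : Vsp -> Prop :=
  fun X => forall eta, S eta -> contract X eta = form0.

Definition weakly_lagrangian k L :=
  isotropic k L /\ (forall X, L (X, form0) <-> ann (pr2 L) X).

Definition linear_on (E : Vsp -> Prop) (eps : Vsp -> kForm) : Prop :=
  forall c X Y, E X -> E Y -> eps (c *: X + Y) = formD (formZ c (eps X)) (eps Y).

Definition E_skew (E : Vsp -> Prop) (eps : Vsp -> kForm) : Prop :=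
  forall X Y, E X -> E Y -> contract Y (eps X) = formZ (-1) (contract X (eps Y)).

End Defs.

(* Since [L] meets [/\^k V^*] trivially, it is the graph of a map [eps] over
   [E = pr1 L]: linearity of [eps] comes from [L] being a subspace, E-skewness
   is the isotropy of [L], and [L ∩ V = pr2(L)°] reads [Im(eps)° = ker eps].
   If [E = V] and [X + eta] is orthogonal to [L], comparing with isotropy gives
   [i_Y eta = i_Y eps(X)] for every [Y], so [X + eta] lies in [L].
   Conversely, given any [X], pick a projection [P] of [V] onto [E] and extend
   the family [Y |-> - i_X eps(Y)] on [E] to one k-form [eta] on [V] with
   [i_Y eta = - i_X eps(Y)]; then [X + eta] is orthogonal to [L], so when [L]
   is lagrangian it lies in [L] and [X] is in [E]. *)

From Pilot Require Import Defs.
From mathcomp Require Import all_boot all_algebra.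
From mathcomp Require Import reals.
From mathcomp Require Import ring lra zify.
From Stdlib Require Import Classical FunctionalExtensionality.
From Stdlib Require Import PropExtensionality ClassicalEpsilon.
(* [all_algebra] exports the [formD]/[formZ] of sesquilinear forms; re-import
   [Defs] so that these names denote its operations on k-forms. *)
Import Defs.
Set Implicit Arguments. Unset Strict Implicit.
Import GRing.Theory Num.Theory.
Local Open Scope ring_scope.

Section Forms.
Variables (R : realType) (n : nat).
Implicit Types (f : kForm R n) (s : seq (Vsp R n)).

Lemma multilinearD f s1 s2 x y : multilinear f ->
  f (s1 ++ (x + y) :: s2) = f (s1 ++ x :: s2) + f (s1 ++ y :: s2).
Proof. by move=> ml; have := ml s1 s2 1 x y; rewrite scale1r mul1r. Qed.

Lemma multilinear0 f s1 s2 : multilinear f -> f (s1 ++ 0 :: s2) = 0.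
Proof.
move=> ml; have := multilinearD s1 s2 0 0 ml; rewrite addr0 => /eqP.
by rewrite -subr_eq0 opprD addrA subrr add0r oppr_eq0 => /eqP.
Qed.

Lemma multilinear_swap f s1 s2 s3 a b : multilinear f ->
  (forall x, f (s1 ++ x :: s2 ++ x :: s3) = 0) ->
  f (s1 ++ a :: s2 ++ b :: s3) = - f (s1 ++ b :: s2 ++ a :: s3).
Proof.
move=> ml alt; have := alt (a + b); rewrite multilinearD //.
have catA' y z : f (s1 ++ y :: s2 ++ z :: s3) = f ((s1 ++ y :: s2) ++ z :: s3).
  by rewrite -catA.
rewrite !catA' !multilinearD // -!catA' !alt add0r addr0 => /eqP.
by rewrite addr_eq0 => /eqP.
Qed.

Lemma alternating_swap f s1 s2 s3 a b : multilinear f -> alternating f ->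
  f (s1 ++ a :: s2 ++ b :: s3) = - f (s1 ++ b :: s2 ++ a :: s3).
Proof. by move=> ml alt; apply: multilinear_swap => //; apply: alt. Qed.

Lemma pairing_eq0 (p q : Vsp R n * kForm R n) :
  pairing p q = @form0 R n <-> contract q.1 p.2 = formZ (-1) (contract p.1 q.2).
Proof.
split=> e; apply: functional_extensionality => s.
  by have := congr1 (fun f => f s) e; rewrite /pairing /formD /formZ /form0 /=; lra.
by rewrite /pairing /formD e /formZ /form0; lra.
Qed.

Lemma kform_contract_inj k f g : (0 < k)%N -> is_kform k f -> is_kform k g ->
  (forall Y, contract Y f = contract Y g) -> f = g.
Proof.
move=> k_gt0 [f_size _ _] [g_size _ _] eqfg.
apply: functional_extensionality => -[|Y t]; last exact: (congr1 (fun h => h t) (eqfg Y)).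
by rewrite f_size ?g_size // => k0; rewrite -k0 in k_gt0.
Qed.
End Forms.

Section Projection.
Variables (R : realType) (n : nat) (E : 'rV[R]_n -> Prop).
Hypotheses (E0 : E 0) (E_lin : forall c x y, E x -> E y -> E (c *: x + y)).

Definition spans_within m (A : 'M[R]_(m, n)) := forall v, (v <= A)%MS -> E v.

Lemma spans_within_rV Y : E Y -> spans_within Y.
Proof. by move=> EY v /sub_rVP [a ->]; rewrite -[a *: Y]addr0; apply: E_lin. Qed.

Lemma spans_within_adds m1 m2 (A : 'M_(m1, n)) (B : 'M_(m2, n)) :
  spans_within A -> spans_within B -> spans_within (A + B)%MS.
Proof.
move=> EA EB v /sub_addsmxP [u ->]; rewrite -[_ *m A]scale1r.
by apply: E_lin; [apply: EA | apply: EB]; rewrite submxMl.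
Qed.

Lemma subspace_spanned :
  exists A : 'M_n, spans_within A /\ forall Y, E Y -> (Y <= A)%MS.
Proof.
suff grow d (A : 'M_n) : spans_within A -> (n - \rank A <= d)%N ->
    exists A' : 'M_n, spans_within A' /\ forall Y, E Y -> (Y <= A')%MS.
  by apply: (grow n 0); [move=> v; rewrite submx0 => /eqP -> | rewrite leq_subr].
elim: d A => [|d IH] A EA rkA.
  exists A; split=> // Y _; apply: submx_full.
  by rewrite /row_full eqn_leq rank_leq_col -subn_eq0 -leqn0.
have [|] := classic (forall Y, E Y -> (Y <= A)%MS); first by exists A.
move=> /not_all_ex_not [Y /(imply_to_and (E Y)) [EY /negP notYA]].
apply: (IH (A + Y)%MS); first exact: spans_within_adds (spans_within_rV EY).
have rk_lt : (\rank A < \rank (A + Y))%N.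
  by rewrite rank_ltmx // ltmxE addsmxSl addsmx_sub submx_refl.
by move: rkA rk_lt; lia.
Qed.

Lemma subspace_projection :
  exists P : 'M[R]_n, (forall v, E (v *m P)) /\ forall Y, E Y -> Y *m P = Y.
Proof.
have [A [EA EsubA]] := subspace_spanned.
exists (pinvmx A *m A); split=> [v|Y /EsubA YA]; rewrite mulmxA.
  by apply: EA; rewrite submxMl.
by rewrite mulmxKpV.
Qed.
End Projection.

Section Extension.
Variables (R : realType) (n : nat) (E : Vsp R n -> Prop).
Implicit Types (phi psi : Vsp R n -> kForm R n) (s t : seq (Vsp R n)).

Definition skew_family phi :=
  [/\ forall Y, E Y -> multilinear (phi Y), forall Y, E Y -> alternating (phi Y),
      linear_on E phi & E_skew E phi].

Lemma E_skewP phi : E_skew E phi <->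
  forall Y Z s, E Y -> E Z -> phi Y (Z :: s) = - phi Z (Y :: s).
Proof.
split=> skew Y Z; last first.
  move=> EY EZ; apply: functional_extensionality => s.
  by rewrite /contract skew // /formZ mulN1r.
move=> s EY EZ; have := congr1 (fun f => f s) (skew Y Z EY EZ).
by rewrite /formZ mulN1r.
Qed.

Lemma skew_family_contract phi u :
  skew_family phi -> skew_family (fun Y => contract u (phi Y)).
Proof.
move=> [ml alt lin /E_skewP skew]; split.
- by move=> Y EY s1; apply: (ml Y EY (u :: s1)).
- by move=> Y EY s1; apply: (alt Y EY (u :: s1)).
- by move=> c Y Z EY EZ; rewrite /contract lin.
apply/E_skewP => Y Z s EY EZ; rewrite /contract.
rewrite (alternating_swap [::] [::] s u Z (ml Y EY) (alt Y EY)) /= skew //.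
by rewrite (alternating_swap [::] [::] s Y u (ml Z EZ) (alt Z EZ)) opprK.
Qed.

Lemma skew_family_scale phi c :
  skew_family phi -> skew_family (fun Y => formZ c (phi Y)).
Proof.
move=> [ml alt lin /E_skewP skew]; split.
- by move=> Y EY s1 s2 a x y; rewrite /formZ ml //; ring.
- by move=> Y EY s1 s2 s3 x; rewrite /formZ alt // mulr0.
- move=> a Y Z EY EZ; rewrite lin //.
  by apply: functional_extensionality => s; rewrite /formZ /formD; ring.
by apply/E_skewP => Y Z s EY EZ; rewrite /formZ skew // mulrN.
Qed.

Variable P : 'M[R]_n.
Hypotheses (P_in : forall v, E (v *m P)) (P_id : forall Y, E Y -> Y *m P = Y).

(* The k-form [eta] with [i_Y eta = phi Y] for [Y] in [E] that vanishes on
   [ker P]: splitting [v = v P + w] with [w] in [ker P] gives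
   [i_v eta = phi (v P) + i_w eta], and [i_w eta] is, recursively, the
   extension of [Y |-> - i_w (phi Y)]. *)
Fixpoint extension phi s : R :=
  if s is v :: t then
    phi (v *m P) t - extension (fun Y => contract (v - v *m P) (phi Y)) t
  else 0.

Lemma extension_cons phi v t : extension phi (v :: t)
  = phi (v *m P) t - extension (fun Y => contract (v - v *m P) (phi Y)) t.
Proof. by []. Qed.

Lemma extension_eq0 phi s :
  (forall Y, E Y -> forall t, phi Y t = 0) -> extension phi s = 0.
Proof.
elim: s phi => [|v s IH] phi phi0 //=.
by rewrite phi0 // IH ?subr0 // => Y EY t; apply: phi0.
Qed.

Lemma extension_eq_on phi psi s :
  (forall Y, E Y -> phi Y = psi Y) -> extension phi s = extension psi s.
Proof.
elim: s phi psi => [|v s IH] phi psi eq_phi //=.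
rewrite eq_phi // (IH _ (fun Y => contract (v - v *m P) (psi Y))) // => Y EY.
by rewrite eq_phi.
Qed.

Lemma extension_linear c phi psi s :
  extension (fun Y => formD (formZ c (phi Y)) (psi Y)) s
  = c * extension phi s + extension psi s.
Proof.
elim: s phi psi => [|v s IH] phi psi /=; first by rewrite mulr0 addr0.
rewrite /formD /formZ (IH (fun Y => contract _ (phi Y)) (fun Y => contract _ (psi Y))).
ring.
Qed.

Lemma extension_size m phi s :
  (forall Y, E Y -> forall t, size t != m -> phi Y t = 0) ->
  size s != m.+1 -> extension phi s = 0.
Proof.
elim: s m phi => [|v s IH] m phi phi_size //= size_s.
rewrite phi_size //; case: m phi_size size_s => [|m] phi_size size_s.
  by rewrite extension_eq0 ?subr0 // => Y EY t; apply: phi_size.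
by rewrite (IH m) ?subr0 // => Y EY t size_t; apply: phi_size.
Qed.

Lemma extension_contract phi Y :
  skew_family phi -> E Y -> contract Y (extension phi) = phi Y.
Proof.
move=> [ml _ _ _] EY; apply: functional_extensionality => t; rewrite /contract /=.
rewrite P_id // subrr extension_eq0 ?subr0 // => Z EZ s.
exact: (multilinear0 [::] s (ml Z EZ)).
Qed.

Lemma extension_multilinear phi : skew_family phi -> multilinear (extension phi).
Proof.
move=> fam s1; elim: s1 phi fam => [|v s1 IH] phi fam s2 c x y /=;
  have [ml _ lin _] := fam; last first.
  rewrite (ml _ (P_in v)) IH; last exact: skew_family_contract.
  ring.
have -> : (c *: x + y) *m P = c *: (x *m P) + y *m P by rewrite mulmxDl scalemxAl.
have -> : c *: x + y - (c *: (x *m P) + y *m P) = c *: (x - x *m P) + (y - y *m P).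
  by rewrite scalerBr addrACA opprD.
rewrite lin // (extension_eq_on _ (psi := fun Y =>
  formD (formZ c (contract (x - x *m P) (phi Y))) (contract (y - y *m P) (phi Y)))).
  by rewrite extension_linear /formD /formZ; ring.
by move=> Y EY; apply: functional_extensionality => t; apply: (ml Y EY [::]).
Qed.

Lemma extension_dup phi x s : skew_family phi -> extension phi (x :: x :: s) = 0.
Proof.
move=> [ml alt _ /E_skewP skew] /=.
rewrite [extension _ s]extension_eq0 ?subr0; last first.
  by move=> Y EY t; apply: (alt Y EY [::] [::]).
have xP_xP : phi (x *m P) (x *m P :: s) = 0.
  by have := skew _ _ s (P_in x) (P_in x); lra.
have split_x : phi (x *m P) (x :: s)
    = phi (x *m P) (x *m P :: s) + phi (x *m P) (x - x *m P :: s).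
  by rewrite -(multilinearD [::] s _ _ (ml _ (P_in x))) /= subrKC.
by rewrite split_x xP_xP add0r /contract subrr.
Qed.

Lemma extension_alternating_head phi x s2 s3 :
  skew_family phi -> extension phi (x :: s2 ++ x :: s3) = 0.
Proof.
elim: s2 phi x => [|y s2 IH] phi x fam; first exact: extension_dup.
have [ml alt _ _] := fam; have fam_x := skew_family_contract (x - x *m P) fam.
rewrite extension_cons.
rewrite (alternating_swap [::] s2 s3 y x (ml _ (P_in x)) (alt _ (P_in x))).
rewrite (@multilinear_swap _ _ _ [::] s2 s3 y x (extension_multilinear fam_x));
  last first.
  by move=> z; apply: IH; apply: skew_family_contract.
have := extension_dup x (s2 ++ y :: s3) fam.
by rewrite extension_cons !cat0s; lra.
Qed.

Lemma extension_alternating phi : skew_family phi -> alternating (extension phi).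
Proof.
move=> fam s1; elim: s1 phi fam => [|v s1 IH] phi fam s2 s3 x.
  exact: extension_alternating_head.
have [_ alt _ _] := fam.
by rewrite /= (alt _ (P_in v)) IH ?subr0 //; apply: skew_family_contract.
Qed.

Lemma extension_kform k phi : (0 < k)%N -> skew_family phi ->
  (forall Y, E Y -> forall t, size t != k.-1 -> phi Y t = 0) ->
  is_kform k (extension phi).
Proof.
move=> k_gt0 fam phi_size; split.
- by move=> s /eqP size_s; apply: (extension_size phi_size); rewrite prednK.
- exact: extension_multilinear.
- exact: extension_alternating.
Qed.
End Extension.

Section Graph.
Variables (R : realType) (n k : nat) (L : Vsp R n * kForm R n -> Prop).
Hypotheses (L_sub : subspace k L) (L_V : forall a, L (0, a) -> a = @form0 R n).

(* Off [pr1 L] this is an unspecified form. *)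
Definition graph_map X : kForm R n :=
  epsilon (inhabits (@form0 R n)) (fun a => L (X, a)).

Lemma graph_mapP X : pr1 L X -> L (X, graph_map X).
Proof. by move=> [a La]; apply: (epsilon_spec _ (fun a => L (X, a))); exists a. Qed.

Lemma subspace_fiber_uniq X a b : L (X, a) -> L (X, b) -> a = b.
Proof.
have [_ L_add L_scale _] := L_sub; move=> La Lb.
have := L_add _ _ La (L_scale (-1) _ Lb); rewrite /= scaleN1r subrr => /L_V ab0.
apply: functional_extensionality => s; have := congr1 (fun f => f s) ab0.
by rewrite /formD /formZ /form0; lra.
Qed.

Lemma graph_mapE p : L p <-> pr1 L p.1 /\ p.2 = graph_map p.1.
Proof.
case: p => X a /=; split=> [La | [/graph_mapP LX ->] //].
have EX : pr1 L X by exists a.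
by split=> //; apply: subspace_fiber_uniq La (graph_mapP EX).
Qed.

Lemma pr2_graph_map : pr2 L = fun eta => exists2 Y, pr1 L Y & eta = graph_map Y.
Proof.
apply: functional_extensionality => eta; apply: propositional_extensionality.
split=> [[Y /graph_mapE [] //] | [Y EY ->]]; first by exists Y.
by exists Y; apply: graph_mapP.
Qed.

Lemma pr1_linear c X Y : pr1 L X -> pr1 L Y -> pr1 L (c *: X + Y).
Proof.
have [_ L_add L_scale _] := L_sub.
by move=> [a La] [b Lb]; eexists; apply: L_add _ _ (L_scale c _ La) Lb.
Qed.

Lemma graph_map_kform X : pr1 L X -> is_kform k (graph_map X).
Proof. by have [_ _ _ L_kform] := L_sub; move=> /graph_mapP /L_kform. Qed.

Lemma graph_map_linear : linear_on (pr1 L) graph_map.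
Proof.
move=> c X Y EX EY; apply/esym/subspace_fiber_uniq; last first.
  by apply: graph_mapP; apply: pr1_linear.
have [_ L_add L_scale _] := L_sub.
exact: L_add (L_scale c _ (graph_mapP EX)) (graph_mapP EY).
Qed.

Lemma graph_map_skew : isotropic k L -> E_skew (pr1 L) graph_map.
Proof.
move=> L_iso X Y EX EY; have [_ orthX] := L_iso _ (graph_mapP EX).
by apply/(pairing_eq0 (X, _) (Y, _)); apply: orthX (graph_mapP EY).
Qed.

Lemma graph_map_skew_family :
  isotropic k L -> skew_family (pr1 L) graph_map.
Proof.
move=> L_iso; split; [| |exact: graph_map_linear | exact: graph_map_skew].
- by move=> Y /graph_map_kform [].
- by move=> Y /graph_map_kform [].
Qed.

Lemma ann_graph_map : (forall X, L (X, @form0 R n) <-> ann (pr2 L) X) ->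
  forall X, ann (fun eta => exists2 Y, pr1 L Y & eta = graph_map Y) X
            <-> pr1 L X /\ graph_map X = @form0 R n.
Proof.
move=> L_ann X; rewrite -pr2_graph_map -L_ann graph_mapE /=.
by split=> -[EX e]; split.
Qed.

Lemma lagrangian_pr1_full : (0 < k)%N -> isotropic k L -> lagrangian k L ->
  forall X, pr1 L X.
Proof.
move=> k_gt0 L_iso L_lag X.
have E0 : pr1 L 0 by have [L0 _ _ _] := L_sub; exists (@form0 R n).
have [P [P_in P_id]] := subspace_projection E0 pr1_linear.
pose phi Y := formZ (-1) (contract X (graph_map Y)).
have phi_fam : skew_family (pr1 L) phi.
  exact: skew_family_scale (skew_family_contract X (graph_map_skew_family L_iso)).
have eta_kform : is_kform k (extension P phi).
  apply: (extension_kform P_in k_gt0 phi_fam) => Y EY t size_t.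
  have [kY _ _] := graph_map_kform EY.
  by rewrite /phi /formZ /contract kY ?mulr0 //= => St; rewrite -St eqxx in size_t.
suff L_eta : L (X, extension P phi) by exists (extension P phi).
apply/L_lag; split=> // -[Y b] /graph_mapE [/= EY ->].
by apply/(pairing_eq0 (X, _) (Y, _)); apply: (extension_contract P_in P_id).
Qed.

Lemma pr1_full_lagrangian : (0 < k)%N -> isotropic k L -> (forall X, pr1 L X) ->
  lagrangian k L.
Proof.
move=> k_gt0 L_iso E_full [X eta]; split; first exact: L_iso.
move=> [eta_kform orth_eta]; apply/graph_mapE; split=> //=.
apply: kform_contract_inj eta_kform (graph_map_kform _) _ => // Y.
have /(pairing_eq0 (X, _) (Y, _)) -> := orth_eta _ (graph_mapP (E_full Y)).
by rewrite (graph_map_skew L_iso).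
Qed.
End Graph.

Theorem proposition3p12 (R : realType) (n k : nat)
    (L : Vsp R n * kForm R n -> Prop) :
  (0 < k)%N -> (k <= n.-1)%N ->
  subspace k L -> weakly_lagrangian k L ->
  (forall a, L (0, a) -> a = @form0 R n) ->
  (exists eps : Vsp R n -> kForm R n,
     [/\ forall X, pr1 L X -> is_kform k (eps X),
         linear_on (pr1 L) eps,
         forall p, L p <-> (pr1 L p.1 /\ p.2 = eps p.1),
         E_skew (pr1 L) eps
       & forall X, ann (fun eta => exists2 Y, pr1 L Y & eta = eps Y) X
                   <-> (pr1 L X /\ eps X = @form0 R n)]) /\
  (lagrangian k L <-> forall X, pr1 L X).
Proof.
move=> k_gt0 _ L_sub [L_iso L_ann] L_V; split.
  exists (graph_map L); split.
  - exact: graph_map_kform L_sub.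
  - exact: graph_map_linear L_sub L_V.
  - exact: graph_mapE L_sub L_V.
  - exact: graph_map_skew L_iso.
  - exact: ann_graph_map L_sub L_V L_ann.
split; first exact: lagrangian_pr1_full L_sub L_V k_gt0 L_iso.
exact: pr1_full_lagrangian L_sub L_V k_gt0 L_iso.
Qed.
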